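(* Let $G$ be a reducible multigraph. Then the number of degree-$0$ vertices remaining after $G$ has been fully reduced by channel-preserving moves equals $\dim_{\mathbf{Z}/2\mathbf{Z}}\mathcal{C}(G)$; in particular this number does not depend on the sequence of channel-preserving moves used.
   Context: Multigraphs (finite, no self-loops) are allowed; $N(v)$ is the multiset of neighbours of $v$ with multiplicity equal to the number of joining edges. A channel is a vertex set $C$ such that every vertex $v$ has an even number of elements of $N(v)$ (counted with multiplicity) in $C$; $\mathcal{C}(G)$ is the $\mathbf{Z}/2\mathbf{Z}$-vector space of channels under symmetric difference. Channel-preserving moves: (VC) for a vertex $v$ of degree 2 adjacent to distinct $v_1,v_2$, contract both edges at $v$ and delete resulting self-loops; (ED) delete two edges with the same endpoints; (FV) for distinct adjacent $v_1,v_2$ with $\deg v_1=1$, delete $v_1,v_2$ and their incident edges. $G$ is reducible if it can be transformed by a finite sequence of channel-preserving moves into a graph all of whose vertices have degree $0$. *)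

From HB Require Import structures.
From Stdlib Require Import Relation_Operators.
From mathcomp Require Import all_boot all_order all_algebra.
Set Implicit Arguments. Unset Strict Implicit. Unset Printing Implicit Defensive.
Import GRing.Theory.

Record mgraph := MGraph { nv : nat; mult : 'I_nv -> 'I_nv -> nat }.
Arguments mult : clear implicits.

Definition wf (G : mgraph) : Prop :=
  (forall x y, mult G x y = mult G y x) /\ (forall x, mult G x x = 0).

Definition deg (G : mgraph) (x : 'I_(nv G)) : nat := \sum_(y : 'I_(nv G)) mult G x y.

(* (ED): delete two edges with the same endpoints u <> w. The vertex sets are
   identified by a bijection f. *)
Definition ED_move (G H : mgraph) : Prop :=
  exists (f : 'I_(nv H) -> 'I_(nv G)) (u w : 'I_(nv G)),
    [/\ bijective f, u != w, 2 <= mult G u w &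
      forall i j, mult H i j =
        if ((f i == u) && (f j == w)) || ((f i == w) && (f j == u))
        then mult G (f i) (f j) - 2 else mult G (f i) (f j)].

(* (FV): v1 <> v2 adjacent, deg v1 = 1; delete v1, v2 and incident edges.
   f embeds the remaining vertices of H onto V(G) \ {v1, v2}. *)
Definition FV_move (G H : mgraph) : Prop :=
  exists (v1 v2 : 'I_(nv G)) (f : 'I_(nv H) -> 'I_(nv G)),
    [/\ v1 != v2, 0 < mult G v1 v2 & deg v1 = 1] /\
    [/\ injective f,
      (forall x, x != v1 -> x != v2 -> exists i, f i = x),
      (forall i, f i != v1 /\ f i != v2) &
      forall i j, mult H i j = mult G (f i) (f j)].

(* (VC): v of degree 2 adjacent to distinct v1, v2; contract both edges at v
   (so v, v1, v2 become a single vertex, represented in H by the preimage of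
   v1) and delete the resulting self-loops. *)
Definition VC_class (G : mgraph) (v v1 v2 x : 'I_(nv G)) : {set 'I_(nv G)} :=
  if x == v1 then [set v; v1; v2] else [set x].

Definition VC_move (G H : mgraph) : Prop :=
  exists (v v1 v2 : 'I_(nv G)) (f : 'I_(nv H) -> 'I_(nv G)),
    [/\ v1 != v2, v != v1 & v != v2] /\
    [/\ deg v = 2, 0 < mult G v v1 & 0 < mult G v v2] /\
    [/\ injective f,
      (forall x, x != v -> x != v2 -> exists i, f i = x),
      (forall i, f i != v /\ f i != v2) &
      forall i j, mult H i j =
        if i == j then 0 else
        \sum_(a in VC_class v v1 v2 (f i)) \sum_(b in VC_class v v1 v2 (f j))
           mult G a b].

Definition move (G H : mgraph) : Prop := VC_move G H \/ ED_move G H \/ FV_move G H.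

Definition moves : mgraph -> mgraph -> Prop := clos_refl_trans mgraph move.

Definition all_deg0 (G : mgraph) : Prop := forall x : 'I_(nv G), deg x = 0.

Definition reducible (G : mgraph) : Prop := exists H, moves G H /\ all_deg0 H.

Definition is_channel (G : mgraph) (C : {set 'I_(nv G)}) : bool :=
  [forall v : 'I_(nv G), ~~ odd (\sum_(u in C) mult G v u)].

(* A vertex set is identified with its indicator vector in F_2^V; symmetric
   difference corresponds to vector addition. *)
Definition setvec (n : nat) (C : {set 'I_n}) : 'rV['F_2]_n :=
  (\row_i (i \in C)%:R)%R.

Definition channel_space (G : mgraph) : {vspace 'rV['F_2]_(nv G)} :=
  <<[seq setvec C | C in [set C : {set 'I_(nv G)} | is_channel C]]>>%VS.

From HB Require Import structures.
From Stdlib Require Import Relation_Operators.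
From mathcomp Require Import all_boot all_order all_algebra.
From mathcomp Require Import finfield zify ring.
Set Implicit Arguments. Unset Strict Implicit. Unset Printing Implicit Defensive.
Import GRing.Theory.
Local Open Scope ring_scope.

(* Identify a vertex set with its indicator vector over F_2: channels become
   the vectors c with sum_y c_y mult(x, y) = 0 at every vertex x, a subspace
   with 2 ^ dim C(G) elements.  Every move embeds the new vertex set into the
   old one, and restriction along this embedding is a bijection between the
   channels of G and those of H: the values of a channel on the vertices that
   disappear are forced by parity conditions (a leaf forces its neighbour to 0,
   a vertex of degree 2 forces its two neighbours to agree), and every channel
   of H extends in this forced way.  So the number of channels is invariant,
   and once all vertices are isolated every vertex set is a channel. *)

Lemma eq_card_in_inv (T1 T2 : finType) (A : {pred T1}) (B : {pred T2})
    (phi : T1 -> T2) (psi : T2 -> T1) :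
  {homo phi : x / x \in A >-> x \in B} -> {homo psi : y / y \in B >-> y \in A} ->
  {in A, cancel phi psi} -> {in B, cancel psi phi} -> #|A| = #|B|.
Proof.
move=> AB BA phiK psiK; rewrite -(card_in_imset (can_in_inj phiK)).
apply: eq_card => y; apply/imsetP/idP => [[x Ax ->]|By]; first exact: AB.
by exists (psi y); rewrite ?psiK ?BA.
Qed.

Lemma sum_nat_eq1 (T : finType) (F : T -> nat) (y : T) :
  \sum_x F x = 1%N -> (0 < F y)%N -> forall z, F z = (z == y).
Proof.
rewrite (bigD1 y) //=; set rest := (\sum_(x | _) _)%N; move=> sumF Fy z.
have /eqP : rest = 0%N by lia.
rewrite sum_nat_eq0 => /forallP /(_ z).
by case: eqP => [-> _|_ /= /eqP //]; lia.
Qed.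

Lemma sum_nat_eq2 (T : finType) (F : T -> nat) (y1 y2 : T) : y1 != y2 ->
  \sum_x F x = 2%N -> (0 < F y1)%N -> (0 < F y2)%N ->
  forall z, F z = ((z == y1) + (z == y2))%N.
Proof.
move=> y12; rewrite (bigD1 y1) // (bigD1 y2) 1?eq_sym //=.
set rest := (\sum_(x | _) _)%N; move=> sumF Fy1 Fy2 z.
have /eqP : rest = 0%N by lia.
rewrite sum_nat_eq0 => /forallP /(_ z).
case: (eqVneq z y1) => [-> _|zy1]; first by rewrite (negbTE y12); lia.
by case: (eqVneq z y2) => [-> _|zy2 /= /eqP //]; lia.
Qed.

Lemma pchar_F2 : 2%N \in [pchar 'F_2].
Proof. exact: pchar_Fp. Qed.

Lemma natr_F2 (n : nat) : n%:R = (odd n)%:R :> 'F_2.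
Proof.
elim: n => [//|n IH]; rewrite -[n.+1]addn1 natrD IH oddD /=.
by case: (odd n); apply/val_inj.
Qed.

Lemma F2_neq0 (a : 'F_2) : a = (a != 0)%:R.
Proof. by move: a => [[|[|//]] ?]; apply/val_inj. Qed.

Lemma F2_eq_double (x y e : 'F_2) : x = y + (e + e) -> x = y.
Proof. by rewrite (addrr_pchar2 pchar_F2) addr0. Qed.

Definition nbr_sum (G : mgraph) (c : 'rV['F_2]_(nv G)) (x : 'I_(nv G)) : 'F_2 :=
  \sum_y c 0 y * (mult G x y)%:R.

Definition channel_vec (G : mgraph) (c : 'rV['F_2]_(nv G)) : bool :=
  [forall x, nbr_sum c x == 0].

Definition nchannels (G : mgraph) : nat := #|[pred c | channel_vec (G := G) c]|.

Lemma channel_vecP (G : mgraph) (c : 'rV['F_2]_(nv G)) :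
  reflect (forall x, nbr_sum c x = 0) (channel_vec c).
Proof. by apply: (iffP forallP) => chc x; apply/eqP. Qed.

Lemma nbr_sum_setvec (G : mgraph) (C : {set 'I_(nv G)}) x :
  nbr_sum (setvec C) x = (odd (\sum_(u in C) mult G x u))%:R.
Proof.
rewrite /nbr_sum -natr_F2 natr_sum (big_mkcond (mem C)) /=.
by apply: eq_bigr => u _; rewrite mxE; case: (u \in C); rewrite ?mul1r ?mul0r.
Qed.

Lemma channel_vec_setvec (G : mgraph) (C : {set 'I_(nv G)}) :
  channel_vec (setvec C) = is_channel C.
Proof. by apply: eq_forallb => x; rewrite nbr_sum_setvec; case: odd. Qed.

Lemma channel_vec_lin (G : mgraph) (a : 'F_2) (c d : 'rV['F_2]_(nv G)) :
  channel_vec c -> channel_vec d -> channel_vec (a *: c + d).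
Proof.
move=> /channel_vecP chc /channel_vecP chd; apply/channel_vecP => x.
rewrite /nbr_sum; under eq_bigr do rewrite !mxE mulrDl -mulrA.
by rewrite big_split -mulr_sumr /= -!/(nbr_sum _ x) chc chd mulr0 addr0.
Qed.

Lemma channel_vec0 (G : mgraph) : channel_vec (0 : 'rV['F_2]_(nv G)).
Proof.
by apply/channel_vecP => x; rewrite /nbr_sum big1 // => y _; rewrite mxE mul0r.
Qed.

Lemma mem_channel_space (G : mgraph) (c : 'rV['F_2]_(nv G)) :
  (c \in channel_space G) = channel_vec c.
Proof.
apply/idP/idP => [|chc].
  rewrite /channel_space; set s := [seq _ | _ in _] => /coord_span ->.
  elim/big_ind: _ => [|d e chd che|i _]; first exact: channel_vec0.
    by rewrite -[d]scale1r; apply: channel_vec_lin.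
  rewrite -[_ *: _]addr0; apply: channel_vec_lin (channel_vec0 _).
  have /mapP[C] : s`_i \in s by apply: mem_nth; rewrite size_tuple ltn_ord.
  by rewrite mem_enum inE -channel_vec_setvec => ? ->.
have c_setvec : c = setvec [set i | c 0 i != 0].
  by apply/rowP => i; rewrite !mxE inE -F2_neq0.
apply: memv_span; apply/mapP; exists [set i | c 0 i != 0] => //.
by rewrite mem_enum inE -channel_vec_setvec -c_setvec.
Qed.

Lemma nchannels_dim (G : mgraph) : nchannels G = (2 ^ \dim (channel_space G))%N.
Proof.
have := card_vspace (channel_space G); rewrite card_Fp // => <-.
apply: eq_card => c.
by rewrite !inE mem_channel_space.
Qed.

Section ParityIsomorphism.

Variables (G H : mgraph) (f : 'I_(nv H) -> 'I_(nv G)).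
Hypotheses (f_bij : bijective f)
  (mult_F2 : forall i j, (mult H i j)%:R = (mult G (f i) (f j))%:R :> 'F_2).

Lemma nbr_sum_colsub_bij (c : 'rV['F_2]_(nv G)) i :
  nbr_sum (colsub f c) i = nbr_sum c (f i).
Proof.
rewrite /nbr_sum [RHS](reindex f) /=; last exact: onW_bij.
by apply: eq_bigr => j _; rewrite mxE mult_F2.
Qed.

Lemma nchannels_parity_iso : nchannels G = nchannels H.
Proof.
have [g fK gK] := f_bij.
have colsubK : cancel (colsub f) (colsub g : 'rV['F_2]_(nv H) -> _).
  by move=> c; apply/rowP => x; rewrite !mxE gK.
have colsubVK : cancel (colsub g) (colsub f : 'rV['F_2]_(nv G) -> _).
  by move=> d; apply/rowP => i; rewrite !mxE fK.
apply: (eq_card_in_inv (phi := colsub f) (psi := colsub g)) => [c|d|c _|d _].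
- rewrite !inE => /channel_vecP chc; apply/channel_vecP => i.
  by rewrite nbr_sum_colsub_bij.
- rewrite !inE => /channel_vecP chd; apply/channel_vecP => x.
  by rewrite -[x]gK -nbr_sum_colsub_bij colsubVK.
- exact: colsubK.
- exact: colsubVK.
Qed.

End ParityIsomorphism.

Section TwoPointComplement.

Variables (n m : nat) (f : 'I_m -> 'I_n) (a b : 'I_n).
Hypotheses (f_inj : injective f) (a_neq_b : a != b)
  (f_onto : forall x, x != a -> x != b -> exists i, f i = x)
  (f_avoid : forall i, f i != a /\ f i != b).

Lemma big_compl2 (V : nmodType) (F : 'I_n -> V) :
  \sum_x F x = \sum_i F (f i) + F a + F b.
Proof.
have -> : \sum_i F (f i) = \sum_(x | (x != a) && (x != b)) F x.
  rewrite -(big_imset _ (in2W f_inj)) /=; apply: eq_bigl => x.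
  apply/imsetP/andP => [[i _ ->]|[xa xb]]; first exact: f_avoid.
  by have [i <-] := f_onto xa xb; exists i.
rewrite (bigD1 a) //= (bigD1 b) 1?eq_sym //=.
by rewrite addrA addrC addrA.
Qed.

Lemma compl2P x : [\/ x = a, x = b | exists i, x = f i].
Proof.
have [->|xa] := eqVneq x a; first by constructor 1.
have [->|xb] := eqVneq x b; first by constructor 2.
by have [i <-] := f_onto xa xb; constructor 3; exists i.
Qed.

Definition extend2 (R : Type) (d : 'rV[R]_m) (ya yb : R) : 'rV[R]_n :=
  \row_x if [pick i | f i == x] is Some i then d 0 i else if x == a then ya else yb.

Lemma extend2_f (R : Type) (d : 'rV[R]_m) (ya yb : R) i :
  extend2 d ya yb 0 (f i) = d 0 i.
Proof.
by rewrite mxE; case: pickP => [j /eqP/f_inj -> //|/(_ i)]; rewrite eqxx.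
Qed.

Lemma extend2_a (R : Type) (d : 'rV[R]_m) (ya yb : R) :
  extend2 d ya yb 0 a = ya.
Proof.
rewrite mxE eqxx; case: pickP => // i /eqP fi.
by have [] := f_avoid i; rewrite fi eqxx.
Qed.

Lemma extend2_b (R : Type) (d : 'rV[R]_m) (ya yb : R) :
  extend2 d ya yb 0 b = yb.
Proof.
rewrite mxE eq_sym (negbTE a_neq_b); case: pickP => // i /eqP fi.
by have [] := f_avoid i; rewrite fi eqxx.
Qed.

Lemma colsub_extend2 (R : Type) (d : 'rV[R]_m) (ya yb : R) :
  colsub f (extend2 d ya yb) = d.
Proof. by apply/rowP => i; rewrite mxE extend2_f. Qed.

Lemma extend2_colsub (R : Type) (c : 'rV[R]_n) :
  extend2 (colsub f c) (c 0 a) (c 0 b) = c.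
Proof.
apply/rowP => x; case: (compl2P x) => [->|->|[i ->]].
- exact: extend2_a.
- exact: extend2_b.
- by rewrite extend2_f mxE.
Qed.

End TwoPointComplement.

Section LeafDeletion.

Variables (G H : mgraph) (v1 v2 : 'I_(nv G)) (f : 'I_(nv H) -> 'I_(nv G)).
Hypotheses (symG : forall x y, mult G x y = mult G y x)
  (loopG : forall x, mult G x x = 0%N).
Hypotheses (v12 : v1 != v2) (adj12 : (0 < mult G v1 v2)%N) (leaf : deg v1 = 1%N).
Hypotheses (f_inj : injective f)
  (f_onto : forall x, x != v1 -> x != v2 -> exists i, f i = x)
  (f_avoid : forall i, f i != v1 /\ f i != v2)
  (multH : forall i j, mult H i j = mult G (f i) (f j)).

Lemma mult_leaf y : mult G v1 y = (y == v2).
Proof. exact: sum_nat_eq1 leaf adj12 y. Qed.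

Let big_compl := big_compl2 f_inj v12 f_onto f_avoid.

Lemma nbr_sum_leaf (c : 'rV['F_2]_(nv G)) : nbr_sum c v1 = c 0 v2.
Proof.
rewrite /nbr_sum big_compl big1 => [|j _]; last first.
  by rewrite mult_leaf (negbTE (f_avoid j).2) mulr0.
by rewrite !mult_leaf eqxx (negbTE v12) mulr0 !add0r mulr1.
Qed.

Lemma nbr_sum_leaf_nbr (c : 'rV['F_2]_(nv G)) :
  nbr_sum c v2 = \sum_j c 0 (f j) * (mult G v2 (f j))%:R + c 0 v1.
Proof. by rewrite /nbr_sum big_compl symG mult_leaf eqxx loopG mulr1 mulr0 addr0. Qed.

Lemma nbr_sum_colsub_leaf (c : 'rV['F_2]_(nv G)) i :
  c 0 v2 = 0 -> nbr_sum (colsub f c) i = nbr_sum c (f i).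
Proof.
move=> cv2; rewrite /nbr_sum big_compl symG mult_leaf (negbTE (f_avoid i).2).
by rewrite cv2 mul0r mulr0 !addr0; apply: eq_bigr => j _; rewrite mxE multH.
Qed.

Definition leaf_lift (d : 'rV['F_2]_(nv H)) : 'rV['F_2]_(nv G) :=
  extend2 f v1 d (- \sum_j d 0 j * (mult G v2 (f j))%:R) 0.

Lemma nchannels_leaf_deletion : nchannels G = nchannels H.
Proof.
have lift_v1 d : leaf_lift d 0 v1 = - \sum_j d 0 j * (mult G v2 (f j))%:R.
  exact: extend2_a.
have lift_v2 d : leaf_lift d 0 v2 = 0 by apply: extend2_b.
have chan_v2 c : channel_vec c -> c 0 v2 = 0.
  by move=> /channel_vecP chc; rewrite -nbr_sum_leaf chc.
apply: (eq_card_in_inv (phi := colsub f) (psi := leaf_lift)) => [c|d|c|d _].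
- rewrite !inE => chc; apply/channel_vecP => i.
  by rewrite nbr_sum_colsub_leaf ?chan_v2 //; apply/channel_vecP.
- rewrite !inE => /channel_vecP chd; apply/channel_vecP => x.
  case: (compl2P f_onto x) => [->|->|[i ->]].
  + by rewrite nbr_sum_leaf lift_v2.
  + rewrite nbr_sum_leaf_nbr lift_v1; under eq_bigr do rewrite extend2_f //.
    exact: subrr.
  + by rewrite -nbr_sum_colsub_leaf ?lift_v2 // colsub_extend2.
- rewrite inE => chc; rewrite -{2}(extend2_colsub f_inj v12 f_onto f_avoid c).
  rewrite /leaf_lift chan_v2 //; congr extend2.
  move/channel_vecP/(_ v2): chc; rewrite nbr_sum_leaf_nbr.
move/eqP; rewrite addrC addr_eq0 => /eqP ->.
  by congr (- _); apply: eq_bigr => j _; rewrite mxE.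
- exact: colsub_extend2.
Qed.

End LeafDeletion.

Lemma big_set3 (T : finType) (V : nmodType) (x y z : T) (F : T -> V) :
  x != y -> x != z -> y != z -> \sum_(a in [set x; y; z]) F a = F x + F y + F z.
Proof.
move=> xy xz yz; rewrite setUC big_setU1 /=; last first.
  by rewrite !inE negb_or ![z == _]eq_sym xz yz.
by rewrite big_setU1 /= ?inE // big_set1 addrC.
Qed.

Section DegreeTwoContraction.

Variables (G H : mgraph) (v v1 v2 : 'I_(nv G)) (f : 'I_(nv H) -> 'I_(nv G))
  (k : 'I_(nv H)).
Hypotheses (symG : forall x y, mult G x y = mult G y x)
  (loopG : forall x, mult G x x = 0%N).
Hypotheses (v12 : v1 != v2) (vv1 : v != v1) (vv2 : v != v2) (degv : deg v = 2%N)
  (adj1 : (0 < mult G v v1)%N) (adj2 : (0 < mult G v v2)%N).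
Hypotheses (f_inj : injective f)
  (f_onto : forall x, x != v -> x != v2 -> exists i, f i = x)
  (f_avoid : forall i, f i != v /\ f i != v2)
  (multH : forall i j, mult H i j =
     if i == j then 0%N else
     \sum_(a in VC_class v v1 v2 (f i)) \sum_(b in VC_class v v1 v2 (f j)) mult G a b)
  (fk : f k = v1).

Lemma mult_deg2 y : mult G v y = ((y == v1) + (y == v2))%N.
Proof. exact: sum_nat_eq2 v12 degv adj1 adj2 y. Qed.

Lemma mult_v1_v : mult G v1 v = 1%N.
Proof. by rewrite symG mult_deg2 eqxx (negbTE v12). Qed.

Lemma mult_v2_v : mult G v2 v = 1%N.
Proof. by rewrite symG mult_deg2 eqxx eq_sym (negbTE v12). Qed.

Lemma f_neq_v1 j : j != k -> f j != v1.
Proof. by rewrite -fk; apply: contra => /eqP/f_inj ->. Qed.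

Lemma mult_f_v j : j != k -> mult G (f j) v = 0%N.
Proof.
by move=> jk; rewrite symG mult_deg2 (negbTE (f_neq_v1 jk)) (negbTE (f_avoid j).2).
Qed.

Lemma contraction_sym i j : mult H i j = mult H j i.
Proof.
rewrite !multH eq_sym; case: eqP => // _; rewrite exchange_big.
by apply: eq_bigr => a _; apply: eq_bigr => b _.
Qed.

Lemma mult_contraction_k i : i != k ->
  mult H i k = (mult G (f i) v + mult G (f i) v1 + mult G (f i) v2)%N.
Proof.
move=> ik; rewrite multH (negbTE ik) /VC_class (negbTE (f_neq_v1 ik)) fk eqxx.
by rewrite big_set1 big_set3 // eq_sym.
Qed.

Lemma mult_contraction_off_k i j :
  i != k -> j != k -> mult H i j = mult G (f i) (f j).
Proof.
move=> ik jk; rewrite multH /VC_class (negbTE (f_neq_v1 ik)) (negbTE (f_neq_v1 jk)).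
by rewrite !big_set1; case: eqP => [->|]; rewrite ?loopG.
Qed.

Let big_compl := big_compl2 f_inj vv2 f_onto f_avoid.

Let big_k (F : 'I_(nv H) -> 'F_2) : \sum_j F j = F k + \sum_(j | j != k) F j.
Proof. exact: bigD1. Qed.

Lemma nbr_sum_deg2 (c : 'rV['F_2]_(nv G)) : nbr_sum c v = c 0 v1 + c 0 v2.
Proof.
rewrite /nbr_sum big_compl big_k big1 => [|j jk]; last first.
  by rewrite symG mult_f_v // mulr0.
rewrite fk loopG [mult G v v1]symG mult_v1_v [mult G v v2]symG mult_v2_v.
by rewrite mulr0 !mulr1 !addr0.
Qed.

Lemma nbr_sum_contracted_v1 (c : 'rV['F_2]_(nv G)) : nbr_sum c v1 =
  \sum_j c 0 (f j) * (mult G v1 (f j))%:R + c 0 v + c 0 v2 * (mult G v1 v2)%:R.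
Proof. by rewrite /nbr_sum big_compl mult_v1_v mulr1. Qed.

Lemma nbr_sum_colsub_contraction (c : 'rV['F_2]_(nv G)) i : i != k ->
  c 0 v2 = c 0 v1 -> nbr_sum (colsub f c) i = nbr_sum c (f i).
Proof.
move=> ik cv2; rewrite /nbr_sum big_compl !big_k mxE fk mult_contraction_k //.
rewrite mult_f_v // cv2.
under eq_bigr => j jk do rewrite mxE mult_contraction_off_k //.
rewrite !natrD; ring.
Qed.

Lemma nbr_sum_colsub_contracted (c : 'rV['F_2]_(nv G)) :
  c 0 v2 = c 0 v1 -> nbr_sum (colsub f c) k = nbr_sum c v1 + nbr_sum c v2.
Proof.
move=> cv2.
have -> : nbr_sum (colsub f c) k = \sum_(j | j != k) c 0 (f j) * (mult G v1 (f j))%:R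
    + \sum_(j | j != k) c 0 (f j) * (mult G v2 (f j))%:R.
  rewrite /nbr_sum big_k multH eqxx mulr0 add0r -big_split /=.
  apply: eq_bigr => j jk; rewrite mxE contraction_sym mult_contraction_k //.
  by rewrite mult_f_v // add0n natrD mulrDr !(symG (f j)).
rewrite /nbr_sum !big_compl !big_k fk mult_v1_v mult_v2_v !loopG cv2.
(* The contributions of v and of the edge v1 v2 are counted twice. *)
apply/esym/(F2_eq_double (e := c 0 v + c 0 v1 * (mult G v1 v2)%:R)).
rewrite [mult G v2 v1]symG; ring.
Qed.

Definition contraction_lift (d : 'rV['F_2]_(nv H)) : 'rV['F_2]_(nv G) :=
  extend2 f v d (- (\sum_j d 0 j * (mult G v1 (f j))%:R + d 0 k * (mult G v1 v2)%:R))
    (d 0 k).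

Lemma nchannels_contraction : nchannels G = nchannels H.
Proof.
set lift := contraction_lift.
have lift_f d i : lift d 0 (f i) = d 0 i by apply: extend2_f.
have lift_v2 d : lift d 0 v2 = d 0 k by apply: extend2_b.
have lift_v1 d : lift d 0 v1 = d 0 k by rewrite -fk lift_f.
have lift_nbr_v1 d : nbr_sum (lift d) v1 = 0.
  rewrite nbr_sum_contracted_v1 lift_v2; under eq_bigr do rewrite lift_f.
  by rewrite /lift /contraction_lift (extend2_a f_avoid) addrAC subrr.
have chan_v2 c : channel_vec c -> c 0 v2 = c 0 v1.
  move=> /channel_vecP/(_ v); rewrite nbr_sum_deg2 addrC => /eqP.
  by rewrite addr_eq0 (oppr_pchar2 pchar_F2) => /eqP.
apply: (eq_card_in_inv (phi := colsub f) (psi := lift)) => [c|d|c|d _].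
- rewrite !inE => chc; have /channel_vecP chc' := chc; apply/channel_vecP => i.
  have [->|ik] := eqVneq i k.
    by rewrite nbr_sum_colsub_contracted ?chan_v2 // !chc' addr0.
  by rewrite nbr_sum_colsub_contraction ?chan_v2.
- rewrite !inE => /channel_vecP chd; apply/channel_vecP => x.
  have lift_e : lift d 0 v2 = lift d 0 v1 by rewrite lift_v1 lift_v2.
  case: (compl2P f_onto x) => [->|->|[i ->]].
  + by rewrite nbr_sum_deg2 lift_v1 lift_v2 (addrr_pchar2 pchar_F2).
  + have := nbr_sum_colsub_contracted lift_e.
    by rewrite colsub_extend2 // chd lift_nbr_v1 add0r.
  + have [->|ik] := eqVneq i k; first by rewrite fk lift_nbr_v1.
    by rewrite -nbr_sum_colsub_contraction // colsub_extend2.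
- rewrite inE => chc; rewrite -{2}(extend2_colsub f_inj vv2 f_onto f_avoid c).
  rewrite /lift /contraction_lift mxE fk -chan_v2 //; congr extend2.
  move/channel_vecP/(_ v1): chc; rewrite nbr_sum_contracted_v1 addrAC.
  move/eqP; rewrite addrC addr_eq0 => /eqP ->.
  by congr (- (_ + _)); apply: eq_bigr => j _; rewrite mxE.
- exact: colsub_extend2.
Qed.

End DegreeTwoContraction.

Lemma ED_move_nchannels (G H : mgraph) :
  wf G -> ED_move G H -> wf H /\ nchannels G = nchannels H.
Proof.
move=> [symG loopG] [f [u [w [f_bij uw m2 multH]]]]; split.
  split => [i j|i]; rewrite !multH; last by rewrite loopG; case: ifP.
  by rewrite symG orbC ![(f j == _) && _]andbC.
apply: nchannels_parity_iso f_bij _ => i j; rewrite multH.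
case: ifP => // /orP[] /andP[/eqP -> /eqP ->]; rewrite ?[mult G w u]symG;
  by rewrite natrB // (pchar_Fp_0 (isT : prime 2)) subr0.
Qed.

Lemma FV_move_nchannels (G H : mgraph) :
  wf G -> FV_move G H -> wf H /\ nchannels G = nchannels H.
Proof.
move=> [symG loopG] [v1 [v2 [f [[v12 adj leaf] [f_inj f_onto f_avoid multH]]]]].
split; first by split => [i j|i]; rewrite !multH.
exact: (nchannels_leaf_deletion symG loopG v12 adj leaf f_inj f_onto f_avoid multH).
Qed.

Lemma VC_move_nchannels (G H : mgraph) :
  wf G -> VC_move G H -> wf H /\ nchannels G = nchannels H.
Proof.
move=> [symG loopG] [v [v1 [v2 [f [[v12 vv1 vv2] [[degv adj1 adj2]
  [f_inj f_onto f_avoid multH]]]]]]].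
have [k fk] : exists k, f k = v1 by apply: f_onto; rewrite // eq_sym.
split; first by split => [i j|i]; [apply: contraction_sym | rewrite multH eqxx].
exact: (nchannels_contraction symG loopG v12 vv1 vv2 degv adj1 adj2
  f_inj f_onto f_avoid multH fk).
Qed.

Lemma move_nchannels (G H : mgraph) :
  wf G -> move G H -> wf H /\ nchannels G = nchannels H.
Proof.
move=> wfG [mv|[mv|mv]].
- exact: VC_move_nchannels.
- exact: ED_move_nchannels.
- exact: FV_move_nchannels.
Qed.

Lemma moves_nchannels (G H : mgraph) :
  moves G H -> wf G -> wf H /\ nchannels G = nchannels H.
Proof.
elim=> {G H} [G H mv|//|G K H _ IHGK _ IHKH] wfG; first exact: move_nchannels.
have [wfK ->] := IHGK wfG; exact: IHKH.
Qed.

Lemma nchannels_all_deg0 (G : mgraph) : all_deg0 G -> nchannels G = (2 ^ nv G)%N.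
Proof.
move=> deg0; rewrite /nchannels (eq_card (B := predT)) => [|c].
  by rewrite card_mx card_Fp // mul1n.
rewrite !inE; apply/channel_vecP => x.
rewrite /nbr_sum big1 // => y _.
have /eqP := deg0 x; rewrite sum_nat_eq0 => /forallP/(_ y)/eqP ->.
exact: mulr0.
Qed.

Local Close Scope ring_scope.

Theorem theorem6p3 (G : mgraph) :
  wf G -> reducible G ->
  forall H : mgraph, moves G H -> all_deg0 H ->
  #|[set x : 'I_(nv H) | deg x == 0]| = \dim (channel_space G).
Proof.
(* [reducible G] is witnessed by the two hypotheses that follow it. *)
move=> wfG _ H GH deg0.
have -> : [set x : 'I_(nv H) | deg x == 0] = setT.
  by apply/setP => x; rewrite !inE deg0.
apply/eqP; rewrite cardsT card_ord -(@eqn_exp2l 2) // -nchannels_dim.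
by rewrite (moves_nchannels GH wfG).2 nchannels_all_deg0.
Qed.
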